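(* Under the assumptions and notation of Theorem 3.1, fix $\varphi\in D$ and let $\Psi_t(s):=\big\|[F(s/m(t))]^{m(t)}\varphi-T_s\varphi\big\|_X$. Then for each $\varepsilon>0$ there exist $t_\varepsilon>0$ and $s_\varepsilon>0$ such that $\Psi_t(s)/s<\varepsilon$ for all $t\in(0,t_\varepsilon]$ and all $s\in(0,s_\varepsilon]$.
   Context: $X$ is a Banach space; $(T_t)_{t\ge0}$ a strongly continuous contraction semigroup on $X$ with generator $(L,\mathrm{Dom}(L))$; $(F(t))_{t\ge0}$ a strongly continuous family of contractions on $X$ with $F(0)=\mathrm{Id}$, Chernoff equivalent to $(T_t)$, i.e. there is a core $D\subset\mathrm{Dom}(L)$ for $L$ with $\lim_{t\to0}\|t^{-1}(F(t)\varphi-\varphi)-L\varphi\|_X=0$ for $\varphi\in D$ (and consequently $[F(\tau/n)]^n\psi\to T_\tau\psi$ uniformly for $\tau$ in compact intervals, for every $\psi\in X$); $m:(0,\infty)\to\mathbb N_0$ monotone with $m(t)\to\infty$ as $t\to0$; $B^0:=\mathrm{Id}$. *)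

From Stdlib Require Import Reals.
Open Scope R_scope.

Record Banach := {
  car :> Type;
  zero : car;
  add : car -> car -> car;
  opp : car -> car;
  scal : R -> car -> car;
  norm : car -> R;
  add_assoc : forall x y z, add x (add y z) = add (add x y) z;
  add_comm : forall x y, add x y = add y x;
  add_zero : forall x, add x zero = x;
  add_opp : forall x, add x (opp x) = zero;
  scal_assoc : forall a b x, scal a (scal b x) = scal (a * b) x;
  scal_one : forall x, scal 1 x = x;
  scal_distr_l : forall a x y, scal a (add x y) = add (scal a x) (scal a y);
  scal_distr_r : forall a b x, scal (a + b) x = add (scal a x) (scal b x);
  norm_eq_zero : forall x, norm x = 0 -> x = zero;
  norm_triangle : forall x y, norm (add x y) <= norm x + norm y;
  norm_scal : forall a x, norm (scal a x) = Rabs a * norm x;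
  complete : forall u : nat -> car,
    (forall e, 0 < e -> exists N, forall n p, (N <= n)%nat -> (N <= p)%nat ->
        norm (add (u n) (opp (u p))) < e) ->
    exists l, forall e, 0 < e -> exists N, forall n, (N <= n)%nat ->
        norm (add (u n) (opp l)) < e
}.

Arguments zero {_}.
Arguments add {_}.
Arguments opp {_}.
Arguments scal {_}.
Arguments norm {_}.

Definition sub {X : Banach} (x y : X) : X := add x (opp y).

Definition linear_contraction {X : Banach} (A : X -> X) : Prop :=
  (forall x y, A (add x y) = add (A x) (A y)) /\
  (forall a x, A (scal a x) = scal a (A x)) /\
  (forall x, norm (A x) <= norm x).

Definition strongly_continuous_contraction_family {X : Banach} (F : R -> X -> X) : Prop :=
  (forall t, 0 <= t -> linear_contraction (F t)) /\
  (forall x t0, 0 <= t0 -> forall e, 0 < e -> exists d, 0 < d /\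
     forall t, 0 <= t -> Rabs (t - t0) < d -> norm (sub (F t x) (F t0 x)) < e).

Definition C0_contraction_semigroup {X : Banach} (T : R -> X -> X) : Prop :=
  strongly_continuous_contraction_family T /\
  (forall x, T 0 x = x) /\
  (forall t s x, 0 <= t -> 0 <= s -> T (t + s) x = T t (T s x)).

Definition lim0plus {X : Banach} (g : R -> X) (y : X) : Prop :=
  forall e, 0 < e -> exists d, 0 < d /\
    forall t, 0 < t -> t < d -> norm (sub (g t) y) < e.

Definition diff_quot {X : Banach} (F : R -> X -> X) (x : X) : R -> X :=
  fun t => scal (/ t) (sub (F t x) x).

Definition is_generator {X : Banach} (T : R -> X -> X) (DomL : X -> Prop) (L : X -> X) : Prop :=
  (forall x, DomL x <-> exists y, lim0plus (diff_quot T x) y) /\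
  (forall x, DomL x -> lim0plus (diff_quot T x) (L x)).

Definition is_core {X : Banach} (DomL : X -> Prop) (L : X -> X) (D : X -> Prop) : Prop :=
  (forall x, D x -> DomL x) /\
  (forall x, DomL x -> forall e, 0 < e -> exists y, D y /\
     norm (sub y x) < e /\ norm (sub (L y) (L x)) < e).

Fixpoint powop {X : Banach} (B : X -> X) (n : nat) (x : X) : X :=
  match n with
  | O => x
  | S k => B (powop B k x)
  end.

(* Write A := F(h) with h := s/M and psi := L phi. The Chernoff condition says
   A phi = phi + h psi + o(h), and the product formula together with strong
   continuity gives A^j psi = psi + o(1) as long as j h <= s is small (for a
   bounded number j of factors this is continuity of F at 0, for many factors
   it is F(tau/j)^j psi ~ T_tau psi ~ psi). Since A is a linear contraction,
   telescoping yields A^M phi = phi + s psi + o(s) uniformly in M >= 1, while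
   T_s phi = phi + s psi + o(s) because psi is the generator applied to phi. *)
From Stdlib Require Import Reals Lra Lia.
Open Scope R_scope.

Arguments add_assoc {_}. Arguments add_comm {_}. Arguments add_zero {_}.
Arguments add_opp {_}. Arguments scal_assoc {_}. Arguments scal_one {_}.
Arguments scal_distr_l {_}. Arguments scal_distr_r {_}.
Arguments norm_triangle {_}. Arguments norm_scal {_}.

Section BanachAlgebra.
Context {X : Banach}.
Implicit Types x y z w : X.

Lemma add_0_l x : add zero x = x.
Proof. rewrite add_comm; apply add_zero. Qed.

Lemma add_self_eq_zero x : add x x = x -> x = zero.
Proof.
  intro Hx. transitivity (add (add x x) (opp x)).
  - rewrite <- add_assoc, add_opp, add_zero. reflexivity.
  - rewrite Hx. apply add_opp.
Qed.

Lemma scal_0_l x : scal 0 x = zero.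
Proof. apply add_self_eq_zero. rewrite <- scal_distr_r. f_equal; ring. Qed.

Lemma opp_unique x y : add x y = zero -> y = opp x.
Proof.
  intro Hxy. rewrite <- (add_zero y), <- (add_opp x), add_assoc.
  rewrite (add_comm y x), Hxy, add_0_l. reflexivity.
Qed.

Lemma opp_eq_scal x : opp x = scal (-1) x.
Proof.
  symmetry; apply opp_unique. rewrite <- (scal_one x) at 1.
  rewrite <- scal_distr_r. replace (1 + -1) with 0 by ring. apply scal_0_l.
Qed.

Lemma norm_zero : norm (@zero X) = 0.
Proof. rewrite <- (scal_0_l zero), norm_scal, Rabs_R0; ring. Qed.

Lemma opp_add x y : opp (add x y) = add (opp x) (opp y).
Proof. rewrite !opp_eq_scal, scal_distr_l. reflexivity. Qed.

Lemma opp_involutive x : opp (opp x) = x.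
Proof. symmetry. apply opp_unique. rewrite add_comm. apply add_opp. Qed.

Lemma add_add_swap x y z w : add (add x y) (add z w) = add (add x z) (add y w).
Proof.
  rewrite <- !add_assoc. f_equal. rewrite !add_assoc. f_equal. apply add_comm.
Qed.

Lemma scal_opp a x : scal a (opp x) = opp (scal a x).
Proof. rewrite !opp_eq_scal, !scal_assoc. f_equal; ring. Qed.

Definition dist x y := norm (sub x y).

Lemma dist_refl x : dist x x = 0.
Proof. unfold dist, sub. rewrite add_opp. apply norm_zero. Qed.

Lemma dist_triangle x y z : dist x z <= dist x y + dist y z.
Proof.
  unfold dist, sub.
  replace (add x (opp z)) with (add (add x (opp y)) (add y (opp z))).
  - apply norm_triangle.
  - rewrite add_assoc, <- (add_assoc x), (add_comm (opp y) y), add_opp, add_zero.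
    reflexivity.
Qed.

Lemma dist_sym x y : dist x y = dist y x.
Proof.
  unfold dist, sub.
  replace (add y (opp x)) with (opp (add x (opp y))).
  - rewrite (opp_eq_scal (add x (opp y))), norm_scal, Rabs_left by lra. ring.
  - rewrite opp_add, opp_involutive, add_comm. reflexivity.
Qed.

Lemma dist_ge0 x y : 0 <= dist x y.
Proof.
  pose proof (dist_triangle x y x) as Hxyx.
  rewrite dist_refl, (dist_sym y x) in Hxyx. lra.
Qed.

Lemma dist_add x y z w : dist (add x y) (add z w) <= dist x z + dist y w.
Proof. unfold dist, sub. rewrite opp_add, add_add_swap. apply norm_triangle. Qed.

Lemma dist_scal a x y : dist (scal a x) (scal a y) = Rabs a * dist x y.
Proof. unfold dist, sub. rewrite <- scal_opp, <- scal_distr_l, norm_scal. reflexivity. Qed.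

Lemma dist_affine_diff_quot x y z h : h <> 0 ->
  dist x (add y (scal h z)) = Rabs h * dist (scal (/ h) (sub x y)) z.
Proof.
  intro Hh. rewrite <- dist_scal, scal_assoc, Rinv_r, scal_one by exact Hh.
  unfold dist, sub. rewrite opp_add, add_assoc. reflexivity.
Qed.

End BanachAlgebra.

Section LinearContractions.
Context {X : Banach}.
Implicit Types A : X -> X.

Lemma linear_contraction_opp A : linear_contraction A -> forall x, A (opp x) = opp (A x).
Proof. intros [_ [Hscal _]] x. rewrite !opp_eq_scal, Hscal. reflexivity. Qed.

Lemma linear_contraction_dist A : linear_contraction A ->
  forall x y, dist (A x) (A y) <= dist x y.
Proof.
  intros HA x y. unfold dist, sub. rewrite <- linear_contraction_opp by exact HA.
  destruct HA as [Hadd [_ Hnorm]]. rewrite <- Hadd. apply Hnorm.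
Qed.

Lemma powop_linear_contraction A n :
  linear_contraction A -> linear_contraction (powop A n).
Proof.
  intros (Hadd & Hscal & Hnorm). induction n as [|n (IHadd & IHscal & IHnorm)]; simpl.
  - split; [|split]; intros; auto; lra.
  - split; [|split]; intros.
    + rewrite IHadd, Hadd; reflexivity.
    + rewrite IHscal, Hscal; reflexivity.
    + eapply Rle_trans; [apply Hnorm | apply IHnorm].
Qed.

Lemma powop_Sr A n x : powop A (S n) x = powop A n (A x).
Proof. induction n as [|n IHn]; simpl in *; [|rewrite IHn]; reflexivity. Qed.

Lemma powop_dist A psi : linear_contraction A ->
  forall j, dist (powop A j psi) psi <= INR j * dist (A psi) psi.
Proof.
  intros HA j. induction j as [|j IHj].
  - simpl. rewrite dist_refl. lra.
  - rewrite powop_Sr, S_INR.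
    pose proof (dist_triangle (powop A j (A psi)) (powop A j psi) psi).
    pose proof (linear_contraction_dist _ (powop_linear_contraction A j HA) (A psi) psi).
    lra.
Qed.

Lemma powop_euler_step A phi psi h e1 e2 k : linear_contraction A -> 0 <= h ->
  dist (A phi) (add phi (scal h psi)) <= h * e1 ->
  (forall j, (j < k)%nat -> dist (powop A j psi) psi <= e2) ->
  dist (powop A k phi) (add phi (scal (INR k * h) psi)) <= INR k * h * (e1 + e2).
Proof.
  intros HA Hh Hstep Hdrift. induction k as [|k IHk].
  - simpl. rewrite Rmult_0_l, scal_0_l, add_zero, dist_refl. lra.
  - rewrite powop_Sr, S_INR.
    replace ((INR k + 1) * h) with (INR k * h + h) by ring.
    rewrite scal_distr_r, add_assoc.
    pose proof (dist_triangle (powop A k (A phi)) (powop A k (add phi (scal h psi)))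
                  (add (add phi (scal (INR k * h) psi)) (scal h psi))) as Htri.
    pose proof (linear_contraction_dist _ (powop_linear_contraction A k HA)
                  (A phi) (add phi (scal h psi))) as Hfirst.
    destruct (powop_linear_contraction A k HA) as (Hadd & Hscal & _).
    rewrite Hadd, Hscal in Hfirst, Htri.
    pose proof (dist_add (powop A k phi) (scal h (powop A k psi))
                  (add phi (scal (INR k * h) psi)) (scal h psi)) as Hsecond.
    rewrite dist_scal, Rabs_pos_eq in Hsecond by exact Hh.
    pose proof (IHk (fun j Hj => Hdrift j ltac:(lia))).
    pose proof (Rmult_le_compat_l h _ _ Hh (Hdrift k ltac:(lia))).
    lra.
Qed.

End LinearContractions.

Section ContractionFamilies.
Variable X : Banach.

Lemma dist_at_0 (G : R -> X -> X) :
  strongly_continuous_contraction_family G -> (forall x, G 0 x = x) ->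
  forall x e, 0 < e -> exists d, 0 < d /\
    forall h, 0 <= h -> h < d -> dist (G h x) x < e.
Proof.
  intros [_ HGc] HG0 x e He.
  destruct (HGc x 0 (Rle_refl 0) e He) as [d [Hd HGd]].
  exists d. split; [exact Hd|]. intros h Hh Hhd.
  unfold dist. rewrite <- (HG0 x) at 2. apply HGd; [exact Hh|].
  rewrite Rminus_0_r, Rabs_pos_eq; lra.
Qed.

Lemma diff_quot_approx (G : R -> X -> X) x y : lim0plus (diff_quot G x) y ->
  forall e, 0 < e -> exists d, 0 < d /\
    forall h, 0 < h -> h < d -> dist (G h x) (add x (scal h y)) < h * e.
Proof.
  intros Hlim e He. destruct (Hlim e He) as [d [Hd Hquot]].
  exists d. split; [exact Hd|]. intros h Hh Hhd.
  rewrite dist_affine_diff_quot, Rabs_pos_eq by lra.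
  apply Rmult_lt_compat_l; [exact Hh|]. apply Hquot; assumption.
Qed.

Variables (F T : R -> X -> X).
Hypothesis HF : strongly_continuous_contraction_family F.
Hypothesis HF0 : forall x, F 0 x = x.
Hypothesis HT : strongly_continuous_contraction_family T.
Hypothesis HT0 : forall x, T 0 x = x.
Hypothesis Hprod : forall psi b, 0 <= b -> forall e, 0 < e -> exists N, forall n, (N <= n)%nat ->
  forall tau, 0 <= tau -> tau <= b ->
    norm (sub (powop (F (tau / INR n)) n psi) (T tau psi)) < e.

Lemma powop_dist_small_time psi e : 0 < e -> exists d, 0 < d /\
  forall h j, 0 < h -> INR j * h <= d -> dist (powop (F h) j psi) psi < e.
Proof.
  intro He.
  destruct (Hprod psi 1 ltac:(lra) (e / 2) ltac:(lra)) as [N HN].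
  destruct (dist_at_0 T HT HT0 psi (e / 2) ltac:(lra)) as [dT [HdT HTd]].
  assert (HN1 : 0 < INR N + 1) by (pose proof (pos_INR N); lra).
  destruct (dist_at_0 F HF HF0 psi (e / (INR N + 1))
              ltac:(apply Rdiv_lt_0_compat; lra)) as [dF [HdF HFd]].
  exists (Rmin 1 (Rmin dT dF) / 2).
  pose proof (Rmin_l 1 (Rmin dT dF)). pose proof (Rmin_r 1 (Rmin dT dF)).
  pose proof (Rmin_l dT dF). pose proof (Rmin_r dT dF).
  assert (0 < Rmin 1 (Rmin dT dF)) by (repeat apply Rmin_glb_lt; lra).
  split; [lra|]. intros h j Hh Hjh.
  destruct j as [|j]; [simpl; rewrite dist_refl; exact He|].
  set (n := S j) in *.
  assert (Hn : 1 <= INR n) by (apply (le_INR 1); unfold n; lia).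
  assert (Hhd : h <= INR n * h) by nra.
  destruct (Nat.le_gt_cases n N) as [HnN|HnN].
  - (* few factors: continuity of F at 0 *)
    assert (HFlc : linear_contraction (F h)) by (apply (proj1 HF); lra).
    pose proof (powop_dist _ psi HFlc n).
    pose proof (HFd h ltac:(lra) ltac:(lra)).
    pose proof (le_INR _ _ HnN).
    pose proof (dist_ge0 (F h psi) psi).
    apply Rle_lt_trans with (INR N * (e / (INR N + 1))).
    + nra.
    + apply Rmult_lt_reg_r with (INR N + 1); [lra|].
      field_simplify; nra.
  - (* many factors: F(tau/n)^n psi ~ T_tau psi ~ psi with tau := n h *)
    set (tau := INR n * h) in *.
    replace h with (tau / INR n) by (unfold tau; field; lra).
    pose proof (HN n ltac:(lia) tau ltac:(unfold tau; nra) ltac:(lra)).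
    pose proof (HTd tau ltac:(unfold tau; nra) ltac:(lra)).
    pose proof (dist_triangle (powop (F (tau / INR n)) n psi) (T tau psi) psi).
    unfold dist in *. lra.
Qed.

Lemma chernoff_power_little_o phi psi :
  lim0plus (diff_quot F phi) psi -> lim0plus (diff_quot T phi) psi ->
  forall e, 0 < e -> exists s0, 0 < s0 /\
    forall M s, (1 <= M)%nat -> 0 < s -> s <= s0 ->
      dist (powop (F (s / INR M)) M phi) (T s phi) < s * e.
Proof.
  intros HFphi HTphi e He.
  destruct (diff_quot_approx F _ _ HFphi (e / 4) ltac:(lra)) as [dF [HdF HFd]].
  destruct (diff_quot_approx T _ _ HTphi (e / 4) ltac:(lra)) as [dT [HdT HTd]].
  destruct (powop_dist_small_time psi (e / 4) ltac:(lra)) as [dP [HdP HPd]].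
  exists (Rmin dP (Rmin dF dT) / 2).
  pose proof (Rmin_l dP (Rmin dF dT)). pose proof (Rmin_r dP (Rmin dF dT)).
  pose proof (Rmin_l dF dT). pose proof (Rmin_r dF dT).
  assert (0 < Rmin dP (Rmin dF dT)) by (repeat apply Rmin_glb_lt; lra).
  split; [lra|]. intros M s HM Hs Hs0.
  assert (HMr : 1 <= INR M) by (apply (le_INR 1); exact HM).
  set (h := s / INR M).
  assert (Hh : 0 < h) by (unfold h; apply Rdiv_lt_0_compat; lra).
  assert (HMh : INR M * h = s) by (unfold h; field; lra).
  assert (Hhs : h <= s) by nra.
  assert (HFlc : linear_contraction (F h)) by (apply (proj1 HF); lra).
  assert (Hdrift : forall j, (j < M)%nat -> dist (powop (F h) j psi) psi <= e / 4).
  { intros j Hj. left. apply HPd; [exact Hh|].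
    pose proof (le_INR j M ltac:(lia)). nra. }
  pose proof (powop_euler_step (F h) phi psi h (e / 4) (e / 4) M HFlc ltac:(lra)
                (Rlt_le _ _ (HFd h Hh ltac:(lra))) Hdrift) as Heuler.
  rewrite HMh in Heuler.
  pose proof (HTd s Hs ltac:(lra)) as Hgen.
  rewrite dist_sym in Hgen.
  pose proof (dist_triangle (powop (F h) M phi) (add phi (scal s psi)) (T s phi)).
  nra.
Qed.

End ContractionFamilies.

Theorem lemma4 (X : Banach) (T : R -> X -> X) (DomL : X -> Prop) (L : X -> X)
  (F : R -> X -> X) (D : X -> Prop) (m : R -> nat)
  (HT : C0_contraction_semigroup T)
  (HL : is_generator T DomL L)
  (HF : strongly_continuous_contraction_family F)
  (HF0 : forall x, F 0 x = x)
  (HD : is_core DomL L D)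
  (Hchernoff : forall phi, D phi -> lim0plus (diff_quot F phi) (L phi))
  (Hprod : forall psi b, 0 <= b -> forall e, 0 < e -> exists N, forall n, (N <= n)%nat ->
     forall tau, 0 <= tau -> tau <= b ->
       norm (sub (powop (F (tau / INR n)) n psi) (T tau psi)) < e)
  (Hm_mono : (forall t1 t2, 0 < t1 -> t1 <= t2 -> (m t2 <= m t1)%nat) \/
             (forall t1 t2, 0 < t1 -> t1 <= t2 -> (m t1 <= m t2)%nat))
  (Hm_inf : forall N, exists d, 0 < d /\ forall t, 0 < t -> t < d -> (N <= m t)%nat)
  (phi : X) (Hphi : D phi) :
  forall eps, 0 < eps -> exists t_eps, 0 < t_eps /\ exists s_eps, 0 < s_eps /\
    forall t s, 0 < t -> t <= t_eps -> 0 < s -> s <= s_eps ->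
      norm (sub (powop (F (s / INR (m t))) (m t) phi) (T s phi)) / s < eps.
Proof.
  intros eps Heps.
  destruct HT as [HTfam [HT0 _]].
  assert (HTphi : lim0plus (diff_quot T phi) (L phi)).
  { apply (proj2 HL), (proj1 HD), Hphi. }
  destruct (chernoff_power_little_o X F T HF HF0 HTfam HT0 Hprod phi (L phi)
              (Hchernoff phi Hphi) HTphi eps Heps) as [s0 [Hs0 Hclose]].
  destruct (Hm_inf 1%nat) as [dm [Hdm Hm1]].
  exists (dm / 2). split; [lra|]. exists s0. split; [exact Hs0|].
  intros t s Ht Htle Hs Hsle.
  pose proof (Hclose (m t) s ltac:(apply Hm1; lra) Hs Hsle) as Hlt.
  unfold dist in Hlt. set (d := norm _) in *.
  apply Rmult_lt_reg_r with s; [exact Hs|].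
  replace (d / s * s) with d by (field; lra). lra.
Qed.
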